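(* Let $\Omega=(0,L)^2$ with periodic boundary conditions, $M$ a positive integer, $h=L/M$, and let $\mathbb{V}_h\cong\mathbb{R}^{M^2}$ be the space of real grid functions on the periodic grid $\{(ih,jh):1\le i,j\le M\}$. Let $\Lambda_h$ be the standard five-point central-difference matrix of the Laplacian with periodic boundary conditions, and $\varepsilon>0$. Let $\tau_k>0$ ($k\ge1$) be time steps, $t_k=\sum_{j\le k}\tau_j$, $t_0=0$, with step ratios $r_k=\tau_k/\tau_{k-1}$ for $k\ge2$ and $r_1:=0$. Let $u^n\in\mathbb{V}_h$ solve $$D_2u^n=\varepsilon^2\Lambda_hu^n-f(u^n),\qquad n\ge1,$$ where $f(u)=u^{3}-u$ componentwise, $D_2u^1=(u^1-u^0)/\tau_1$ and, for $n\ge2$, $D_2u^n=\frac{1+2r_n}{\tau_n(1+r_n)}(u^n-u^{n-1})-\frac{r_n^2}{\tau_n(1+r_n)}(u^{n-1}-u^{n-2})$. Assume $$0<r_k<\frac{3+\sqrt{17}}{2}\quad\text{for } 2\le k\le N,$$ and $$\tau_k\le\min\Big\{\frac{1+2r_k}{1+r_k},\ \frac{2+4r_k-r_k^2}{1+r_k}-\frac{r_{k+1}}{1+r_{k+1}}\Big\}\quad\text{for } k\ge1.$$ Define, for $k\ge0$, $$E[u^k]=-\frac{\varepsilon^2}{2}(u^k)^T\Lambda_hu^k+\frac14\sum_{i}\big(1-(u_i^k)^2\big)^2,$$ and the modified energy $\widehat E[u^0]=E[u^0]$ and, for $k\ge1$, $$\widehat E[u^k]=E[u^k]+\frac{r_{k+1}\tau_k}{2(1+r_{k+1})}\sum_i\Big(\frac{u_i^k-u_i^{k-1}}{\tau_k}\Big)^2,$$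 where sums run over all components (grid points). Then $\widehat E[u^k]\le\widehat E[u^{k-1}]$ for all $k\ge1$.
   Context: Nonlinear operations on vectors are componentwise. The ratios $r_{k+1}$ appearing in the step condition and modified energy refer to the (positive) ratio of the next step to the current step. *)

From HB Require Import structures.
From mathcomp Require Import all_boot all_order all_algebra.
Set Implicit Arguments. Unset Strict Implicit. Unset Printing Implicit Defensive.
Import Order.TTheory GRing.Theory Num.Theory.
Local Open Scope ring_scope.

(* Real grid functions on the periodic M x M grid (indices 0..M-1, which by
   periodicity is the same grid as 1..M). *)
Definition gridfun (R : rcfType) (M : nat) := 'I_M -> 'I_M -> R.

Definition lap (R : rcfType) (M : nat) (h : R) (u : gridfun R M) : gridfun R M :=
  fun i j => (u (ordS i) j + u (ord_pred i) j + u i (ordS j) + u i (ord_pred j)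
              - 4 * u i j) / h ^+ 2.

Definition gsum (R : rcfType) (M : nat) (v : gridfun R M) : R :=
  \sum_(i < M) \sum_(j < M) v i j.

Definition fnl (R : rcfType) (x : R) : R := x ^+ 3 - x.

Definition stepr (R : rcfType) (tau : nat -> R) (k : nat) : R :=
  if (2 <= k)%N then tau k / tau k.-1 else 0.

Definition D2 (R : rcfType) (M : nat) (tau : nat -> R) (u : nat -> gridfun R M)
    (n : nat) : gridfun R M :=
  fun i j =>
    if (n <= 1)%N then (u n i j - u n.-1 i j) / tau n
    else (1 + 2 * stepr tau n) / (tau n * (1 + stepr tau n)) * (u n i j - u n.-1 i j)
       - (stepr tau n) ^+ 2 / (tau n * (1 + stepr tau n)) * (u n.-1 i j - u n.-2 i j).

Definition energy (R : rcfType) (M : nat) (h eps : R) (v : gridfun R M) : R :=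
  - (eps ^+ 2 / 2) * gsum (fun i j => v i j * lap h v i j)
  + 1 / 4 * gsum (fun i j => (1 - v i j ^+ 2) ^+ 2).

Definition menergy (R : rcfType) (M : nat) (h eps : R) (tau : nat -> R)
    (u : nat -> gridfun R M) (k : nat) : R :=
  if k == 0%N then energy h eps (u 0%N)
  else energy h eps (u k)
     + stepr tau k.+1 * tau k / (2 * (1 + stepr tau k.+1))
       * gsum (fun i j => ((u k i j - u k.-1 i j) / tau k) ^+ 2).

From HB Require Import structures.
From mathcomp Require Import all_boot all_order all_algebra.
From mathcomp Require Import ring lra.
Import Order.TTheory GRing.Theory Num.Theory.
Set Implicit Arguments. Unset Strict Implicit.
Local Open Scope ring_scope.

(* Test the scheme at step k against the increment d = u^k - u^{k-1} and sum
   over the grid.  Summation by parts bounds the Laplacian term by the change of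
   the discrete Dirichlet energy; the double well F satisfies
   F(a) - F(b) <= (a - b) f(a) + (a - b)^2/2; and the BDF2 term minus the
   leftover (a - b)^2/2 dominates the change of the kinetic part of the modified
   energy, because under the step-size condition their difference is a negative
   semidefinite quadratic form in two consecutive increments. *)

Section GridSums.
Variables (R : rcfType) (M : nat).
Implicit Types F G v w : gridfun R M.

Lemma eq_gsum F G : (forall i j, F i j = G i j) -> gsum F = gsum G.
Proof. by move=> FG; apply: eq_bigr => i _; apply: eq_bigr => j _. Qed.

Lemma ler_gsum F G : (forall i j, F i j <= G i j) -> gsum F <= gsum G.
Proof. by move=> FG; apply: ler_sum => i _; apply: ler_sum => j _. Qed.

Lemma gsumD F G : gsum (fun i j => F i j + G i j) = gsum F + gsum G.
Proof. by rewrite /gsum -big_split; apply: eq_bigr => i _; rewrite big_split. Qed.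

Lemma gsumZ (c : R) F : gsum (fun i j => c * F i j) = c * gsum F.
Proof. by rewrite /gsum mulr_sumr; apply: eq_bigr => i _; rewrite mulr_sumr. Qed.

Lemma gsumB F G : gsum (fun i j => F i j - G i j) = gsum F - gsum G.
Proof.
rewrite -[- gsum G]mulN1r -gsumZ -gsumD.
by apply: eq_gsum => i j; rewrite mulN1r.
Qed.

Lemma gsum_shift_row F (s : 'I_M -> 'I_M) :
  injective s -> gsum (fun i j => F (s i) j) = gsum F.
Proof. by move=> s_inj; rewrite /gsum [RHS](reindex_inj s_inj). Qed.

Lemma gsum_shift_col F (s : 'I_M -> 'I_M) :
  injective s -> gsum (fun i j => F i (s j)) = gsum F.
Proof.
by move=> s_inj; apply: eq_bigr => i _; rewrite [RHS](reindex_inj s_inj).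
Qed.

Definition grad_dot v w (i j : 'I_M) : R :=
  (v (ordS i) j - v i j) * (w (ordS i) j - w i j)
  + (v i (ordS j) - v i j) * (w i (ordS j) - w i j).

Lemma gsum_mul_lap (h : R) v w :
  gsum (fun i j => w i j * lap h v i j) = - gsum (grad_dot v w) / h ^+ 2.
Proof.
have -> : gsum (fun i j => w i j * lap h v i j) =
    gsum (fun i j => w i j * (v (ordS i) j + v (ord_pred i) j + v i (ordS j)
                              + v i (ord_pred j) - 4 * v i j)) / h ^+ 2.
  by rewrite mulrC -gsumZ; apply: eq_gsum => i j; rewrite /lap; ring.
congr (_ / _); apply/eqP; rewrite -subr_eq0 opprK -gsumD.
(* Regroup into differences of a grid function and its periodic shift. *)
pose A i j := v i j * w i j.
pose Bi i j := v i j * w (ordS i) j.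
pose Bj i j := v i j * w i (ordS j).
have -> : gsum (fun i j => w i j * (v (ordS i) j + v (ord_pred i) j + v i (ordS j)
                              + v i (ord_pred j) - 4 * v i j) + grad_dot v w i j)
    = gsum (fun i j => (A (ordS i) j - A i j) + (Bi (ord_pred i) j - Bi i j)
                       + (A i (ordS j) - A i j) + (Bj i (ord_pred j) - Bj i j)).
  by apply: eq_gsum => i j; rewrite /A /Bi /Bj /grad_dot !ord_predK; ring.
rewrite gsumD gsumB (gsum_shift_col Bj (@ord_pred_inj M)) subrr addr0.
rewrite gsumD gsumB (gsum_shift_col A (@ordS_inj M)) subrr addr0.
rewrite gsumD !gsumB (gsum_shift_row A (@ordS_inj M)).
by rewrite (gsum_shift_row Bi (@ord_pred_inj M)) !subrr addr0.
Qed.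

Lemma grad_dot_sub_le (c : R) v w (i j : 'I_M) : 0 <= c ->
  c * grad_dot v v i j - c * grad_dot w w i j
  <= 2 * c * grad_dot v (fun i j => v i j - w i j) i j.
Proof.
move=> c_ge0; rewrite -subr_ge0.
have -> : 2 * c * grad_dot v (fun i j => v i j - w i j) i j
    - (c * grad_dot v v i j - c * grad_dot w w i j)
    = c * grad_dot (fun i j => v i j - w i j) (fun i j => v i j - w i j) i j.
  by rewrite /grad_dot; ring.
by rewrite mulr_ge0 // addr_ge0 // -expr2 sqr_ge0.
Qed.

End GridSums.

Definition double_well (R : rcfType) (x : R) : R := 1 / 4 * (1 - x ^+ 2) ^+ 2.

Lemma double_well_sub_le (R : rcfType) (a b : R) :
  double_well a - double_well b <= (a - b) * fnl a + (a - b) ^+ 2 / 2.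
Proof.
rewrite -subr_ge0.
have -> : (a - b) * fnl a + (a - b) ^+ 2 / 2 - (double_well a - double_well b)
    = (a - b) ^+ 2 * ((a + b) ^+ 2 + 2 * a ^+ 2) / 4.
  by rewrite /double_well /fnl; field.
by rewrite divr_ge0 // mulr_ge0 ?sqr_ge0 // addr_ge0 ?sqr_ge0 // mulr_ge0 ?sqr_ge0.
Qed.

Lemma energy_local (R : rcfType) (M : nat) (h eps : R) (v : gridfun R M) :
  energy h eps v
  = gsum (fun i j => eps ^+ 2 / 2 / h ^+ 2 * grad_dot v v i j + double_well (v i j)).
Proof. by rewrite /energy gsum_mul_lap [RHS]gsumD /double_well !gsumZ; ring. Qed.

(* r = 0 covers the first, backward Euler, step. *)
Lemma bdf2_energy_step (R : rcfType) (T r s e c : R) :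
  0 < T -> 0 <= r -> 0 <= s ->
  T <= (2 + 4 * r - r ^+ 2) / (1 + r) - s / (1 + s) ->
  s * T / (2 * (1 + s)) * (e / T) ^+ 2 - r ^+ 2 / (2 * T * (1 + r)) * c ^+ 2
  <= e * ((1 + 2 * r) / (T * (1 + r)) * e - r ^+ 2 / (T * (1 + r)) * c)
     - e ^+ 2 / 2.
Proof.
move=> T_gt0 r_ge0 s_ge0 T_le.
have r1_gt0 : 0 < 1 + r by rewrite ltr_wpDr.
have s1_gt0 : 0 < 1 + s by rewrite ltr_wpDr.
rewrite -subr_le0.
have -> : s * T / (2 * (1 + s)) * (e / T) ^+ 2 - r ^+ 2 / (2 * T * (1 + r)) * c ^+ 2
    - (e * ((1 + 2 * r) / (T * (1 + r)) * e - r ^+ 2 / (T * (1 + r)) * c)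
       - e ^+ 2 / 2)
    = ((s / (1 + s) + T - (2 + 4 * r - r ^+ 2) / (1 + r)) * e ^+ 2
       - r ^+ 2 / (1 + r) * (c - e) ^+ 2) / (2 * T).
  by field; rewrite !gt_eqF.
rewrite pmulr_lle0 ?invr_gt0 ?mulr_gt0 // subr_le0 (@le_trans _ _ 0) //.
  by rewrite mulr_le0_ge0 ?sqr_ge0 // subr_le0 -lerBrDl.
by rewrite mulr_ge0 ?sqr_ge0 ?divr_ge0 ?sqr_ge0 // ltW.
Qed.

Section ModifiedEnergy.
Variables (R : rcfType) (M : nat) (tau : nat -> R) (u : nat -> gridfun R M).

Definition kinetic (k : nat) (i j : 'I_M) : R :=
  if k == 0%N then 0
  else stepr tau k.+1 * tau k / (2 * (1 + stepr tau k.+1))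
       * ((u k i j - u k.-1 i j) / tau k) ^+ 2.

Lemma menergyE (h eps : R) k :
  menergy h eps tau u k
  = gsum (fun i j => eps ^+ 2 / 2 / h ^+ 2 * grad_dot (u k) (u k) i j
                     + double_well (u k i j) + kinetic k i j).
Proof.
rewrite gsumD -energy_local /menergy /kinetic; case: k => [|k] /=; last by rewrite gsumZ.
by rewrite /gsum big1 ?addr0 // => i _; rewrite big1.
Qed.

Hypothesis tau_gt0 : forall k, (1 <= k)%N -> 0 < tau k.

Lemma kinetic_sub_le k (i j : 'I_M) : (1 <= k)%N ->
  tau k <= (2 + 4 * stepr tau k - stepr tau k ^+ 2) / (1 + stepr tau k)
           - stepr tau k.+1 / (1 + stepr tau k.+1) ->
  kinetic k i j - kinetic k.-1 i j
  <= (u k i j - u k.-1 i j) * D2 tau u k i j - (u k i j - u k.-1 i j) ^+ 2 / 2.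
Proof.
move=> k_ge1 tau_le.
have s_ge0 : 0 <= stepr tau k.+1.
  by rewrite /stepr ltnS k_ge1 divr_ge0 // ltW ?tau_gt0.
have T_gt0 := tau_gt0 k_ge1.
rewrite /kinetic /D2; case: k k_ge1 tau_le s_ge0 T_gt0 => [//|[|k]] _ tau_le s_ge0 T_gt0 /=.
  have := bdf2_energy_step (u 1%N i j - u 0%N i j) 0 T_gt0 (lexx 0) s_ge0 tau_le.
  by rewrite expr0n /= !(mul0r, mulr0, addr0, subr0, mulr1, mul1r) [_^-1 * _]mulrC.
have T'_gt0 : 0 < tau k.+1 by rewrite tau_gt0.
have r_gt0 : 0 < stepr tau k.+2 by rewrite /stepr /= divr_gt0.
have prev_kineticE : stepr tau k.+2 * tau k.+1 / (2 * (1 + stepr tau k.+2))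
      * ((u k.+1 i j - u k i j) / tau k.+1) ^+ 2
    = stepr tau k.+2 ^+ 2 / (2 * tau k.+2 * (1 + stepr tau k.+2))
      * (u k.+1 i j - u k i j) ^+ 2.
  by rewrite /stepr /=; field; rewrite !gt_eqF // addr_gt0 // divr_gt0.
by rewrite prev_kineticE; apply: bdf2_energy_step => //; apply: ltW.
Qed.

End ModifiedEnergy.

Lemma allen_cahn_weak_form (R : rcfType) (M : nat) (h eps : R)
    (v D w : gridfun R M) :
  (forall i j, D i j = eps ^+ 2 * lap h v i j - fnl (v i j)) ->
  gsum (fun i j => w i j * D i j + eps ^+ 2 / h ^+ 2 * grad_dot v w i j
                   + w i j * fnl (v i j)) = 0.
Proof.
move=> scheme.
have -> : gsum (fun i j => w i j * D i j + eps ^+ 2 / h ^+ 2 * grad_dot v w i j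
                           + w i j * fnl (v i j))
    = gsum (fun i j => eps ^+ 2 * (w i j * lap h v i j)
                       + eps ^+ 2 / h ^+ 2 * grad_dot v w i j).
  by apply: eq_gsum => i j; rewrite scheme; ring.
by rewrite gsumD !gsumZ gsum_mul_lap; ring.
Qed.

Theorem theorem3p1 (R : rcfType) (L eps : R) (M N : nat)
    (tau : nat -> R) (u : nat -> gridfun R M) :
  0 < L -> (0 < M)%N -> 0 < eps ->
  (forall k, (1 <= k)%N -> 0 < tau k) ->
  (forall n, (1 <= n <= N)%N -> forall i j,
      D2 tau u n i j = eps ^+ 2 * lap (L / M%:R) (u n) i j - fnl (u n i j)) ->
  (forall k, (2 <= k <= N)%N ->
      0 < stepr tau k /\ stepr tau k < (3 + Num.sqrt 17) / 2) ->
  (forall k, (1 <= k)%N ->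
      tau k <= Num.min ((1 + 2 * stepr tau k) / (1 + stepr tau k))
                 ((2 + 4 * stepr tau k - stepr tau k ^+ 2) / (1 + stepr tau k)
                  - stepr tau k.+1 / (1 + stepr tau k.+1))) ->
  forall k, (1 <= k <= N)%N ->
    menergy (L / M%:R) eps tau u k <= menergy (L / M%:R) eps tau u k.-1.
Proof.
(* The ratio bound and the first entry of the minimum are not needed for energy
   decay. *)
move=> _ _ _ tau_gt0 scheme _ tau_le k k_range.
have /andP[k_ge1 _] := k_range.
set c := eps ^+ 2 / 2 / (L / M%:R) ^+ 2.
have c_ge0 : 0 <= c by rewrite !divr_ge0 ?sqr_ge0.
have tested := allen_cahn_weak_form (fun i j => u k i j - u k.-1 i j) (scheme k k_range).
have := tau_le k k_ge1; rewrite le_min => /andP[_ tau_le_k].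
rewrite !menergyE -[X in _ <= X]addr0 -tested -gsumD; apply: ler_gsum => i j.
have := grad_dot_sub_le (u k) (u k.-1) i j c_ge0.
have := double_well_sub_le (u k i j) (u k.-1 i j).
have := kinetic_sub_le u tau_gt0 i j k_ge1 tau_le_k.
rewrite /c; lra.
Qed.
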